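(* Let $\theta\in[0,2\pi)$ and $\alpha_2,\alpha_3\in\mathbb C$. Put $\gamma_\to=e^{i(\theta+\sqrt2\Lambda+3\pi/4)}$, $\gamma_\leftarrow=e^{i(-\theta+\sqrt2\Lambda+3\pi/4)}$, $$D_\gamma=\{\psi_0+c_L(L_++\gamma_\to R_-)+c_R(R_++\gamma_\leftarrow L_-):\psi_0\in D(H_0),\ c_L,c_R\in\mathbb C\},$$ $$D_\alpha=\{\psi\in D(H_0^* ):\psi(\Lambda)=\alpha_2\psi'(-\Lambda)\ \text{and}\ \psi'(\Lambda)=\alpha_3\psi(-\Lambda)\}.$$ Then $D_\gamma=D_\alpha$ if and only if $\alpha_2=-e^{i\theta}$ and $\alpha_3=e^{i\theta}$.
   Context: Fix $\Lambda>0$, $\Omega_\Lambda=(-\infty,-\Lambda)\cup(\Lambda,\infty)$. $D(H_0^* )$ is the set of $\psi\in L^2(\Omega_\Lambda)$ such that $\psi,\psi'$ are locally absolutely continuous on each closed half-line $(-\infty,-\Lambda]$, $[\Lambda,\infty)$ and $\psi''$ is square integrable; $\psi(\pm\Lambda),\psi'(\pm\Lambda)$ are one-sided boundary values. $D(H_0)=\{\psi\in D(H_0^* ):\psi(\pm\Lambda)=\psi'(\pm\Lambda)=0\}$ (the domain of the closure of $-\frac{d^2}{dx^2}$ on $C_0^\infty(\Omega_\Lambda)$). Let $N=2^{1/4}e^{\Lambda/\sqrt2}$ and define on $\Omega_\Lambda$: $R_\pm(x)=0$ for $x<-\Lambda$, $R_\pm(x)=Ne^{(-1\pm i)x/\sqrt2}$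 for $x>\Lambda$; $L_\pm(x)=Ne^{(1\mp i)x/\sqrt2}$ for $x<-\Lambda$, $L_\pm(x)=0$ for $x>\Lambda$. *)

From Stdlib Require Import Reals Lra List.
Open Scope R_scope.

Record Cplx := mkC { Re : R ; Im : R }.
Definition C0 : Cplx := mkC 0 0.
Definition RtoC (r : R) : Cplx := mkC r 0.
Definition Cadd (z w : Cplx) : Cplx := mkC (Re z + Re w) (Im z + Im w).
Definition Copp (z : Cplx) : Cplx := mkC (- Re z) (- Im z).
Definition Csub (z w : Cplx) : Cplx := Cadd z (Copp w).
Definition Cmul (z w : Cplx) : Cplx :=
  mkC (Re z * Re w - Im z * Im w) (Re z * Im w + Im z * Re w).
Definition Cnorm2 (z : Cplx) : R := Re z * Re z + Im z * Im z.
Definition Cmod (z : Cplx) : R := sqrt (Cnorm2 z).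
Definition Cexpi (t : R) : Cplx := mkC (cos t) (sin t).

Definition right_hl (Lam : R) (x : R) : Prop := Lam <= x.
Definition left_hl (Lam : R) (x : R) : Prop := x <= - Lam.

(* derivative within a set S (one-sided at the endpoint of a closed half-line) *)
Definition has_deriv_within (S : R -> Prop) (f df : R -> Cplx) : Prop :=
  forall x, S x -> forall eps, 0 < eps -> exists delta, 0 < delta /\
    forall y, S y -> Rabs (y - x) < delta ->
      Cmod (Csub (Csub (f y) (f x)) (Cmul (df x) (RtoC (y - x)))) <= eps * Rabs (y - x).

Fixpoint ordered_intervals (c : R) (l : list (R * R)) : Prop :=
  match l with
  | nil => True
  | (a, b) :: l' => c <= a /\ a < b /\ ordered_intervals b l'
  end.

Definition total_length (l : list (R * R)) : R :=
  fold_right (fun p s => (snd p - fst p) + s) 0 l.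

Definition variation (f : R -> Cplx) (l : list (R * R)) : R :=
  fold_right (fun p s => Cmod (Csub (f (snd p)) (f (fst p))) + s) 0 l.

Definition loc_abs_cont (S : R -> Prop) (f : R -> Cplx) : Prop :=
  forall lo hi, S lo -> S hi -> lo <= hi ->
    forall eps, 0 < eps -> exists delta, 0 < delta /\
      forall l, ordered_intervals lo l ->
        Forall (fun p => snd p <= hi) l ->
        total_length l < delta -> variation f l < eps.

(* psi is square integrable on S (psi continuous there, so the Lebesgue integral of
   |psi|^2 over S equals the supremum of Riemann integrals over compact subintervals) *)
Definition square_integrable_on (S : R -> Prop) (f : R -> Cplx) : Prop :=
  exists M, forall a b, S a -> S b -> a <= b ->
    exists pr : Riemann_integrable (fun x => Cnorm2 (f x)) a b, RiemannInt pr <= M.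

(* Riesz's quadratic variation: sup over finite families of non-overlapping
   intervals in S of  sum |g(b_k)-g(a_k)|^2/(b_k-a_k).  For an (absolutely)
   continuous g this is finite iff g' exists a.e. and is in L^2(S), and then it
   equals ||g'||^2_{L^2(S)}  (Riesz 1910). *)
Definition riesz2_sum (g : R -> Cplx) (l : list (R * R)) : R :=
  fold_right (fun p s => Cnorm2 (Csub (g (snd p)) (g (fst p))) / (snd p - fst p) + s) 0 l.

Definition deriv_square_integrable_on (S : R -> Prop) (g : R -> Cplx) : Prop :=
  exists M, forall c l, ordered_intervals c l ->
    Forall (fun p => S (fst p) /\ S (snd p)) l -> riesz2_sum g l <= M.

Definition Hstar_on (S : R -> Prop) (psi dpsi : R -> Cplx) : Prop :=
  has_deriv_within S psi dpsi /\
  loc_abs_cont S psi /\ loc_abs_cont S dpsi /\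
  square_integrable_on S psi /\ deriv_square_integrable_on S dpsi.

(* psi in D(H_0^star), with derivative dpsi; psi is represented by its (unique)
   continuous representative on the two closed half-lines; the values of
   psi, dpsi on (-Lam, Lam) are irrelevant *)
Definition Hstar_with (Lam : R) (psi dpsi : R -> Cplx) : Prop :=
  Hstar_on (left_hl Lam) psi dpsi /\ Hstar_on (right_hl Lam) psi dpsi.

Definition in_DH0star (Lam : R) (psi : R -> Cplx) : Prop :=
  exists dpsi, Hstar_with Lam psi dpsi.

Definition in_DH0 (Lam : R) (psi : R -> Cplx) : Prop :=
  exists dpsi, Hstar_with Lam psi dpsi /\
    psi Lam = C0 /\ psi (- Lam) = C0 /\ dpsi Lam = C0 /\ dpsi (- Lam) = C0.

Definition Nc (Lam : R) : R := Rpower 2 (1/4) * exp (Lam / sqrt 2).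

Definition Rplus (Lam : R) (x : R) : Cplx :=
  if Rlt_dec 0 x then Cmul (RtoC (Nc Lam * exp (- x / sqrt 2))) (Cexpi (x / sqrt 2)) else C0.
Definition Rminus (Lam : R) (x : R) : Cplx :=
  if Rlt_dec 0 x then Cmul (RtoC (Nc Lam * exp (- x / sqrt 2))) (Cexpi (- x / sqrt 2)) else C0.
Definition Lplus (Lam : R) (x : R) : Cplx :=
  if Rlt_dec x 0 then Cmul (RtoC (Nc Lam * exp (x / sqrt 2))) (Cexpi (- x / sqrt 2)) else C0.
Definition Lminus (Lam : R) (x : R) : Cplx :=
  if Rlt_dec x 0 then Cmul (RtoC (Nc Lam * exp (x / sqrt 2))) (Cexpi (x / sqrt 2)) else C0.

Definition gamma_to (Lam theta : R) : Cplx := Cexpi (theta + sqrt 2 * Lam + 3 * PI / 4).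
Definition gamma_from (Lam theta : R) : Cplx := Cexpi (- theta + sqrt 2 * Lam + 3 * PI / 4).

(* membership in D_gamma (equality on the closed half-lines, i.e. on Omega_Lam
   together with the one-sided boundary values) *)
Definition in_Dgamma (Lam theta : R) (psi : R -> Cplx) : Prop :=
  exists psi0 cL cR, in_DH0 Lam psi0 /\
    forall x, Lam <= Rabs x ->
      psi x = Cadd (psi0 x)
               (Cadd (Cmul cL (Cadd (Lplus Lam x) (Cmul (gamma_to Lam theta) (Rminus Lam x))))
                     (Cmul cR (Cadd (Rplus Lam x) (Cmul (gamma_from Lam theta) (Lminus Lam x))))).

Definition in_Dalpha (Lam : R) (a2 a3 : Cplx) (psi : R -> Cplx) : Prop :=
  exists dpsi, Hstar_with Lam psi dpsi /\
    psi Lam = Cmul a2 (dpsi (- Lam)) /\ dpsi Lam = Cmul a3 (psi (- Lam)).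

(* Modulo D(H_0), an element of D(H_0^* ) is determined by its boundary values, and those at [-Lam]
   can be prescribed freely.  The two functions L_+ + gamma_to R_- and R_+ + gamma_from L_- are
   decaying exponentials on each half-line, hence lie in D(H_0^* ); the phases of gamma_to and
   gamma_from are exactly those for which both satisfy the boundary conditions of D_alpha with
   alpha_2 = -e^{i theta}, alpha_3 = e^{i theta}; and their Wronskian at [-Lam] is nonzero.  So for
   these alpha the two domains coincide.  Conversely, if D_gamma = D_alpha then L_+ + gamma_to R_-
   lies in D_alpha, and as its value and derivative at [-Lam] are nonzero, the two boundary
   conditions force alpha_2 and alpha_3. *)

From Pilot Require Import Defs.
From Stdlib Require Import Reals Lra Psatz.
From Coquelicot Require Import Rcomplements Hierarchy Continuity Derive RInt RInt_analysis AutoDerive.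
From Stdlib Require Import List.
Open Scope R_scope.

(** * Complex arithmetic *)

Lemma Cplx_ext (z w : Cplx) : Re z = Re w -> Im z = Im w -> z = w.
Proof. destruct z, w; simpl; intros -> ->; reflexivity. Qed.

Definition C1 : Cplx := RtoC 1.

Lemma Cplx_ring_theory : ring_theory C0 C1 Cadd Cmul Csub Copp (@eq Cplx).
Proof. constructor; intros; apply Cplx_ext; simpl; ring. Qed.

Add Ring Cplx_ring : Cplx_ring_theory.

Lemma RtoC_mult a b : RtoC (a * b) = Cmul (RtoC a) (RtoC b).
Proof. apply Cplx_ext; simpl; ring. Qed.

Lemma Re_Csub z w : Re (Csub z w) = Re z - Re w.
Proof. simpl; ring. Qed.

Lemma Im_Csub z w : Im (Csub z w) = Im z - Im w.
Proof. simpl; ring. Qed.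

Lemma Cnorm2_ge0 z : 0 <= Cnorm2 z.
Proof. unfold Cnorm2; nra. Qed.

Lemma Cnorm2_eq0 z : Cnorm2 z = 0 -> z = C0.
Proof. destruct z as [a b]; unfold Cnorm2; simpl; intro H; apply Cplx_ext; simpl; nra. Qed.

Lemma Cnorm2_mul z w : Cnorm2 (Cmul z w) = Cnorm2 z * Cnorm2 w.
Proof. destruct z, w; unfold Cnorm2; simpl; ring. Qed.

Lemma Cnorm2_add_le z w : Cnorm2 (Cadd z w) <= 2 * (Cnorm2 z + Cnorm2 w).
Proof.
  destruct z as [a b], w as [c d]; unfold Cnorm2; simpl.
  pose proof (Rle_0_sqr (a - c)); pose proof (Rle_0_sqr (b - d)); unfold Rsqr in *; nra.
Qed.

Lemma Cnorm2_Cexpi t : Cnorm2 (Cexpi t) = 1.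
Proof. unfold Cnorm2, Cexpi; simpl; rewrite <- (sin2_cos2 t); unfold Rsqr; ring. Qed.

Lemma Cmod_ge0 z : 0 <= Cmod z.
Proof. apply sqrt_pos. Qed.

Lemma Cmod_sqr z : Cmod z * Cmod z = Cnorm2 z.
Proof. apply sqrt_sqrt, Cnorm2_ge0. Qed.

Lemma Cmod_eq0 z : Cmod z = 0 -> z = C0.
Proof. intro H; apply Cnorm2_eq0; rewrite <- Cmod_sqr, H; ring. Qed.

Lemma Cmod_mul z w : Cmod (Cmul z w) = Cmod z * Cmod w.
Proof. unfold Cmod; rewrite Cnorm2_mul; apply sqrt_mult; apply Cnorm2_ge0. Qed.

Lemma Cmod_RtoC r : Cmod (RtoC r) = Rabs r.
Proof. unfold Cmod, Cnorm2; simpl; rewrite <- sqrt_Rsqr_abs; f_equal; unfold Rsqr; ring. Qed.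

Lemma Cmod_opp z : Cmod (Copp z) = Cmod z.
Proof. unfold Cmod, Cnorm2; simpl; f_equal; ring. Qed.

Lemma sqrt_le_of_le_sqr x y : 0 <= y -> x <= y * y -> sqrt x <= y.
Proof. intros Hy H; rewrite <- (sqrt_square y Hy); apply sqrt_le_1_alt, H. Qed.

Lemma Cmod_triangle z w : Cmod (Cadd z w) <= Cmod z + Cmod w.
Proof.
  pose proof (Cmod_ge0 z); pose proof (Cmod_ge0 w).
  unfold Cmod at 1; apply sqrt_le_of_le_sqr; [lra|].
  pose proof (Cmod_sqr z) as Hz; pose proof (Cmod_sqr w) as Hw.
  destruct z as [a b], w as [c d]; unfold Cnorm2 in *; simpl in *.
  set (m := Cmod (mkC a b)) in *; set (n := Cmod (mkC c d)) in *.
  (* Cauchy-Schwarz, via Lagrange's identity *)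
  assert (Hcs : (a * c + b * d) * (a * c + b * d) <= (m * n) * (m * n)).
  { replace ((m * n) * (m * n)) with ((m * m) * (n * n)) by ring; rewrite Hz, Hw.
    pose proof (Rle_0_sqr (a * d - b * c)); unfold Rsqr in *; nra. }
  assert (0 <= m * n) by (apply Rmult_le_pos; assumption).
  assert (a * c + b * d <= m * n) by nra.
  nra.
Qed.

Lemma Rabs_Re_le_Cmod z : Rabs (Re z) <= Cmod z.
Proof. unfold Cmod, Cnorm2; rewrite <- sqrt_Rsqr_abs; apply sqrt_le_1_alt; unfold Rsqr; nra. Qed.

Lemma Rabs_Im_le_Cmod z : Rabs (Im z) <= Cmod z.
Proof. unfold Cmod, Cnorm2; rewrite <- sqrt_Rsqr_abs; apply sqrt_le_1_alt; unfold Rsqr; nra. Qed.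

Lemma Cmod_le_Rabs_Re_Im z : Cmod z <= Rabs (Re z) + Rabs (Im z).
Proof.
  pose proof (Rabs_pos (Re z)); pose proof (Rabs_pos (Im z)).
  unfold Cmod, Cnorm2; apply sqrt_le_of_le_sqr; [lra|].
  pose proof (Rsqr_abs (Re z)); pose proof (Rsqr_abs (Im z)); unfold Rsqr in *; nra.
Qed.

Lemma Cmul_reg_r a b d : Cmul a d = Cmul b d -> d <> C0 -> a = b.
Proof.
  intros H Hd.
  assert (Hn : Cnorm2 (Csub a b) * Cnorm2 d = 0).
  { rewrite <- Cnorm2_mul.
    replace (Cmul (Csub a b) d) with (Csub (Cmul a d) (Cmul b d)) by ring.
    rewrite H; unfold Cnorm2; simpl; ring. }
  destruct (Rmult_integral _ _ Hn) as [Hab | Hd0]; [| now destruct (Hd (Cnorm2_eq0 _ Hd0))].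
  replace a with (Cadd (Csub a b) b) by ring; rewrite (Cnorm2_eq0 _ Hab); ring.
Qed.

(** * Function spaces on a closed half-line *)

Definition convex (S : R -> Prop) : Prop := forall a b x, S a -> S b -> a <= x <= b -> S x.

Lemma left_hl_convex Lam : convex (left_hl Lam).
Proof. unfold convex, left_hl; intros; lra. Qed.

Lemma right_hl_convex Lam : convex (right_hl Lam).
Proof. unfold convex, right_hl; intros; lra. Qed.

Definition Fadd (f g : R -> Cplx) : R -> Cplx := fun x => Cadd (f x) (g x).

Definition cont_within (S : R -> Prop) (f : R -> Cplx) : Prop :=
  forall x, S x -> forall eps, 0 < eps -> exists d, 0 < d /\
    forall y, S y -> Rabs (y - x) < d -> Cmod (Csub (f y) (f x)) < eps.

Lemma Forall_and {A} (P Q : A -> Prop) l : Forall P l -> Forall Q l -> Forall (fun p => P p /\ Q p) l.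
Proof. induction 1; intros HQ; inversion HQ; subst; constructor; auto. Qed.

Lemma ordered_intervals_bounds c l :
  ordered_intervals c l -> Forall (fun p => c <= fst p /\ fst p < snd p) l.
Proof.
  revert c; induction l as [|[a b] l IH]; intros c H; simpl in *; [constructor|].
  destruct H as (Hca & Hab & Hl); constructor; simpl; [lra|].
  eapply Forall_impl; [|exact (IH b Hl)]; intros [x y]; simpl; lra.
Qed.

Lemma total_length_ge0 c l : ordered_intervals c l -> 0 <= total_length l.
Proof.
  intro H; pose proof (ordered_intervals_bounds c l H) as Hl; clear H.
  induction Hl as [|[a b] l Hab _ IH]; simpl in *; lra.
Qed.

Section HalfLine.

Variable S : R -> Prop.
Hypothesis S_convex : convex S.

Lemma ordered_intervals_within lo hi l : S lo -> S hi -> ordered_intervals lo l ->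
  Forall (fun p => snd p <= hi) l -> Forall (fun p => S (fst p) /\ S (snd p) /\ fst p < snd p) l.
Proof.
  intros Hlo Hhi Ho Hf.
  eapply Forall_impl; [|exact (Forall_and _ _ _ (ordered_intervals_bounds _ _ Ho) Hf)].
  intros [a b]; simpl; intros [[H1 H2] H3].
  split; [|split]; [apply (S_convex lo hi); auto; lra | apply (S_convex lo hi); auto; lra | exact H2].
Qed.

Lemma ordered_intervals_in c l : ordered_intervals c l ->
  Forall (fun p => S (fst p) /\ S (snd p)) l -> Forall (fun p => S (fst p) /\ S (snd p) /\ fst p < snd p) l.
Proof.
  intros Ho Hf.
  eapply Forall_impl; [|exact (Forall_and _ _ _ (ordered_intervals_bounds _ _ Ho) Hf)].
  intros [a b]; simpl; tauto.
Qed.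

Lemma Hstar_on_ext f df g dg : Hstar_on S f df ->
  (forall x, S x -> f x = g x) -> (forall x, S x -> df x = dg x) -> Hstar_on S g dg.
Proof.
  intros (Hd & Hf & Hdf & Hsq & Hdsq) Ef Edf.
  assert (Hvar : forall h k, (forall x, S x -> h x = k x) -> forall l,
     Forall (fun p => S (fst p) /\ S (snd p) /\ fst p < snd p) l -> variation h l = variation k l).
  { intros h k E l Hl; induction Hl as [|[a b] l Hab _ IH]; simpl in *; auto.
    rewrite IH, !E by tauto; reflexivity. }
  assert (Hlac : forall h k, (forall x, S x -> h x = k x) -> loc_abs_cont S h -> loc_abs_cont S k).
  { intros h k E Hh lo hi Hlo Hhi Hlh eps He.
    destruct (Hh lo hi Hlo Hhi Hlh eps He) as (d & Hd0 & Hd1); exists d; split; auto.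
    intros l Ho Hl Ht; rewrite <- (Hvar h k E l); auto.
    exact (ordered_intervals_within lo hi l Hlo Hhi Ho Hl). }
  split; [|split; [|split; [|split]]].
  - intros x Hx eps He; destruct (Hd x Hx eps He) as (d & Hd0 & Hd1); exists d; split; auto.
    intros y Hy Hyx; rewrite <- !Ef, <- Edf by auto; auto.
  - exact (Hlac f g Ef Hf).
  - exact (Hlac df dg Edf Hdf).
  - destruct Hsq as [M HM]; exists M; intros a b Ha Hb Hab.
    destruct (HM a b Ha Hb Hab) as [pr Hpr].
    assert (E : forall x, Rmin a b < x < Rmax a b -> Cnorm2 (f x) = Cnorm2 (g x)).
    { intros x Hx; rewrite Rmin_left, Rmax_right in Hx by lra.
      rewrite Ef; auto; apply (S_convex a b); auto; lra. }
    pose proof (ex_RInt_ext _ _ _ _ E (ex_RInt_Reals_1 _ _ _ pr)) as Hg.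
    exists (ex_RInt_Reals_0 _ _ _ Hg).
    rewrite <- RInt_Reals, <- (RInt_ext _ _ _ _ E), (RInt_Reals _ _ _ pr); exact Hpr.
  - destruct Hdsq as [M HM]; exists M; intros c l Ho Hl.
    enough (riesz2_sum dg l = riesz2_sum df l) as -> by exact (HM c l Ho Hl).
    pose proof (ordered_intervals_in c l Ho Hl) as Hin; clear -Hin Edf.
    induction Hin as [|[a b] l Hab _ IH]; simpl in *; auto.
    rewrite IH, !Edf by tauto; reflexivity.
Qed.

Lemma has_deriv_within_cont f df : has_deriv_within S f df -> cont_within S f.
Proof.
  intros H x Hx eps He; destruct (H x Hx 1 Rlt_0_1) as (d & Hd & Hd').
  set (K := Cmod (df x) + 1).
  assert (HK : 0 < K) by (unfold K; pose proof (Cmod_ge0 (df x)); lra).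
  exists (Rmin d (eps / K)); split; [apply Rmin_pos; auto; apply Rdiv_lt_0_compat; auto|].
  intros y Hy Hyx; pose proof (Rmin_l d (eps / K)); pose proof (Rmin_r d (eps / K)).
  specialize (Hd' y Hy ltac:(lra)).
  replace (Csub (f y) (f x)) with
    (Cadd (Csub (Csub (f y) (f x)) (Cmul (df x) (RtoC (y - x)))) (Cmul (df x) (RtoC (y - x)))) by ring.
  eapply Rle_lt_trans; [apply Cmod_triangle|]; rewrite Cmod_mul, Cmod_RtoC.
  assert (Hsmall : Rabs (y - x) * K < eps).
  { assert (Hyx' : Rabs (y - x) < eps / K) by lra.
    apply Rmult_lt_compat_r with (r := K) in Hyx'; [|lra].
    replace (eps / K * K) with eps in Hyx' by (field; lra); exact Hyx'. }
  unfold K in *; pose proof (Rabs_pos (y - x)); nra.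
Qed.

(* clamping to [a, b] turns a function continuous within S into one continuous on all of R *)
Definition clamp a b x := Rmax a (Rmin b x).

Lemma clamp_in a b x : a <= b -> a <= clamp a b x <= b.
Proof. intros; unfold clamp; split; [apply Rmax_l|]; apply Rmax_lub; [lra|apply Rmin_l]. Qed.

Lemma clamp_id a b x : a <= x <= b -> clamp a b x = x.
Proof. intros; unfold clamp; rewrite Rmin_right, Rmax_right by lra; reflexivity. Qed.

Lemma clamp_dist a b x z : a <= z <= b -> Rabs (clamp a b x - z) <= Rabs (x - z).
Proof.
  intros Hz; unfold clamp; destruct (Rle_dec x a); [|destruct (Rle_dec x b)].
  - rewrite Rmin_right, Rmax_left by lra; rewrite !Rabs_left1 by lra; lra.
  - rewrite Rmin_right, Rmax_right by lra; lra.
  - rewrite Rmin_left, Rmax_right by lra; rewrite !Rabs_right by lra; lra.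
Qed.

Lemma continuity_pt_clamp f (g : Cplx -> R) a b z : cont_within S f -> S a -> S b -> a <= z <= b ->
  (forall u v, Rabs (g u - g v) <= Cmod (Csub u v)) ->
  continuity_pt (fun x => g (f (clamp a b x))) z.
Proof.
  intros Hc Ha Hb Hz Hg; assert (Sz : S z) by (apply (S_convex a b); auto).
  intros eps He; destruct (Hc z Sz eps He) as (d & Hd & Hd'); exists d; split; auto.
  intros x [_ Hx]; simpl in *; unfold R_dist in *; rewrite (clamp_id a b z) by lra.
  pose proof (clamp_in a b x ltac:(lra)).
  eapply Rle_lt_trans; [apply Hg|]; apply Hd'.
  - apply (S_convex a b); auto.
  - eapply Rle_lt_trans; [apply (clamp_dist a b x z); lra | exact Hx].
Qed.

Lemma ex_RInt_Cnorm2 f a b : cont_within S f -> S a -> S b -> a <= b ->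
  ex_RInt (fun x => Cnorm2 (f x)) a b.
Proof.
  intros Hc Ha Hb Hab.
  apply (ex_RInt_ext (fun x => Cnorm2 (f (clamp a b x)))).
  { intros x Hx; rewrite Rmin_left, Rmax_right in Hx by lra; rewrite clamp_id by lra; reflexivity. }
  apply (@ex_RInt_continuous R_CompleteNormedModule); intros z Hz.
  rewrite Rmin_left, Rmax_right in Hz by lra; apply continuity_pt_filterlim.
  assert (CRe : continuity_pt (fun x => Re (f (clamp a b x))) z).
  { apply (continuity_pt_clamp f Re); auto; intros u v.
    replace (Re u - Re v) with (Re (Csub u v)) by (simpl; ring); apply Rabs_Re_le_Cmod. }
  assert (CIm : continuity_pt (fun x => Im (f (clamp a b x))) z).
  { apply (continuity_pt_clamp f Im); auto; intros u v.
    replace (Im u - Im v) with (Im (Csub u v)) by (simpl; ring); apply Rabs_Im_le_Cmod. }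
  apply continuity_pt_plus; apply continuity_pt_mult; assumption.
Qed.

Lemma has_deriv_within_add f df g dg : has_deriv_within S f df -> has_deriv_within S g dg ->
  has_deriv_within S (Fadd f g) (Fadd df dg).
Proof.
  intros Hf Hg x Hx eps He.
  destruct (Hf x Hx (eps / 2) ltac:(lra)) as (d1 & Hd1 & H1).
  destruct (Hg x Hx (eps / 2) ltac:(lra)) as (d2 & Hd2 & H2).
  exists (Rmin d1 d2); split; [apply Rmin_pos; auto|].
  intros y Hy Hyx; pose proof (Rmin_l d1 d2); pose proof (Rmin_r d1 d2).
  specialize (H1 y Hy ltac:(lra)); specialize (H2 y Hy ltac:(lra)); unfold Fadd.
  match goal with |- Cmod ?Z <= _ =>
    replace Z with (Cadd (Csub (Csub (f y) (f x)) (Cmul (df x) (RtoC (y - x))))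
                         (Csub (Csub (g y) (g x)) (Cmul (dg x) (RtoC (y - x))))) by ring end.
  eapply Rle_trans; [apply Cmod_triangle|]; lra.
Qed.

Lemma variation_add f g l : variation (Fadd f g) l <= variation f l + variation g l.
Proof.
  induction l as [|[a b] l IH]; simpl; [lra|].
  replace (Csub (Fadd f g b) (Fadd f g a)) with (Cadd (Csub (f b) (f a)) (Csub (g b) (g a)))
    by (unfold Fadd; ring).
  pose proof (Cmod_triangle (Csub (f b) (f a)) (Csub (g b) (g a))); lra.
Qed.

Lemma loc_abs_cont_add f g : loc_abs_cont S f -> loc_abs_cont S g -> loc_abs_cont S (Fadd f g).
Proof.
  intros Hf Hg lo hi Hlo Hhi Hlh eps He.
  destruct (Hf lo hi Hlo Hhi Hlh (eps / 2) ltac:(lra)) as (d1 & Hd1 & H1).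
  destruct (Hg lo hi Hlo Hhi Hlh (eps / 2) ltac:(lra)) as (d2 & Hd2 & H2).
  exists (Rmin d1 d2); split; [apply Rmin_pos; auto|].
  intros l Ho Hl Ht; pose proof (Rmin_l d1 d2); pose proof (Rmin_r d1 d2).
  specialize (H1 l Ho Hl ltac:(lra)); specialize (H2 l Ho Hl ltac:(lra)).
  pose proof (variation_add f g l); lra.
Qed.

Lemma square_integrable_on_add f df g dg : has_deriv_within S f df -> has_deriv_within S g dg ->
  square_integrable_on S f -> square_integrable_on S g -> square_integrable_on S (Fadd f g).
Proof.
  intros Df Dg [M1 H1] [M2 H2]; exists (2 * M1 + 2 * M2); intros a b Ha Hb Hab.
  destruct (H1 a b Ha Hb Hab) as [p1 Hp1], (H2 a b Ha Hb Hab) as [p2 Hp2].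
  pose proof (ex_RInt_Cnorm2 _ a b (has_deriv_within_cont _ _ (has_deriv_within_add _ _ _ _ Df Dg))
                Ha Hb Hab) as Hfg.
  exists (ex_RInt_Reals_0 _ _ _ Hfg); rewrite <- RInt_Reals.
  set (F := fun x => Cnorm2 (f x)); set (G := fun x => Cnorm2 (g x)).
  assert (HFG : is_RInt (fun x => 2 * F x + 2 * G x) a b (2 * RInt F a b + 2 * RInt G a b)).
  { apply (is_RInt_plus (fun x => 2 * F x) (fun x => 2 * G x)).
    - apply (is_RInt_scal F a b 2 (RInt F a b)), (@RInt_correct R_CompleteNormedModule).
      exact (ex_RInt_Reals_1 _ _ _ p1).
    - apply (is_RInt_scal G a b 2 (RInt G a b)), (@RInt_correct R_CompleteNormedModule).
      exact (ex_RInt_Reals_1 _ _ _ p2). }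
  eapply Rle_trans; [apply (RInt_le _ (fun x => 2 * F x + 2 * G x) a b Hab Hfg)|].
  - eexists; exact HFG.
  - intros x _; unfold Fadd, F, G; pose proof (Cnorm2_add_le (f x) (g x)); lra.
  - rewrite (is_RInt_unique _ _ _ _ HFG); unfold F, G.
    rewrite (RInt_Reals _ _ _ p1), (RInt_Reals _ _ _ p2); lra.
Qed.

Lemma riesz2_sum_add_le f g l : Forall (fun p => fst p < snd p) l ->
  riesz2_sum (Fadd f g) l <= 2 * riesz2_sum f l + 2 * riesz2_sum g l.
Proof.
  induction 1 as [|[a b] l Hab _ IH]; simpl in *; [lra|].
  replace (Csub (Fadd f g b) (Fadd f g a)) with (Cadd (Csub (f b) (f a)) (Csub (g b) (g a)))
    by (unfold Fadd; ring).
  pose proof (Cnorm2_add_le (Csub (f b) (f a)) (Csub (g b) (g a))).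
  assert (0 < / (b - a)) by (apply Rinv_0_lt_compat; lra).
  unfold Rdiv; nra.
Qed.

Lemma deriv_square_integrable_on_add f g : deriv_square_integrable_on S f ->
  deriv_square_integrable_on S g -> deriv_square_integrable_on S (Fadd f g).
Proof.
  intros [M1 H1] [M2 H2]; exists (2 * M1 + 2 * M2); intros c l Ho Hl.
  eapply Rle_trans; [apply riesz2_sum_add_le|].
  - eapply Forall_impl; [|exact (ordered_intervals_bounds _ _ Ho)]; simpl; tauto.
  - specialize (H1 c l Ho Hl); specialize (H2 c l Ho Hl); lra.
Qed.

Lemma Hstar_on_add f df g dg : Hstar_on S f df -> Hstar_on S g dg ->
  Hstar_on S (Fadd f g) (Fadd df dg).
Proof.
  intros (A1 & A2 & A3 & A4 & A5) (B1 & B2 & B3 & B4 & B5).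
  split; [|split; [|split; [|split]]].
  - apply has_deriv_within_add; assumption.
  - apply loc_abs_cont_add; assumption.
  - apply loc_abs_cont_add; assumption.
  - eapply square_integrable_on_add; eassumption.
  - apply deriv_square_integrable_on_add; assumption.
Qed.

End HalfLine.

Lemma has_deriv_within_unique S f d1 d2 x : has_deriv_within S f d1 -> has_deriv_within S f d2 -> S x ->
  (forall delta, 0 < delta -> exists y, S y /\ y <> x /\ Rabs (y - x) < delta) -> d1 x = d2 x.
Proof.
  intros H1 H2 Hx Hacc.
  enough (Z : Cmod (Csub (d1 x) (d2 x)) = 0).
  { replace (d1 x) with (Cadd (Csub (d1 x) (d2 x)) (d2 x)) by ring; rewrite (Cmod_eq0 _ Z); ring. }
  apply Rle_antisym; [|apply Cmod_ge0]; apply Rnot_lt_le; intro Hlt.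
  set (m := Cmod (Csub (d1 x) (d2 x))) in *.
  destruct (H1 x Hx (m / 4) ltac:(lra)) as (e1 & He1 & K1).
  destruct (H2 x Hx (m / 4) ltac:(lra)) as (e2 & He2 & K2).
  destruct (Hacc (Rmin e1 e2) (Rmin_pos _ _ He1 He2)) as (y & Sy & Hyx & Hd).
  pose proof (Rmin_l e1 e2); pose proof (Rmin_r e1 e2).
  specialize (K1 y Sy ltac:(lra)); specialize (K2 y Sy ltac:(lra)).
  pose proof (Cmod_triangle (Csub (Csub (f y) (f x)) (Cmul (d2 x) (RtoC (y - x))))
                (Copp (Csub (Csub (f y) (f x)) (Cmul (d1 x) (RtoC (y - x)))))) as T.
  rewrite Cmod_opp in T.
  match type of T with Cmod ?Z <= _ =>
    replace Z with (Cmul (Csub (d1 x) (d2 x)) (RtoC (y - x))) in T by ring end.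
  rewrite Cmod_mul, Cmod_RtoC in T; fold m in T.
  assert (0 < Rabs (y - x)) by (apply Rabs_pos_lt; lra); nra.
Qed.

Lemma has_deriv_within_unique_left Lam f d1 d2 : 0 < Lam ->
  has_deriv_within (left_hl Lam) f d1 -> has_deriv_within (left_hl Lam) f d2 -> d1 (- Lam) = d2 (- Lam).
Proof.
  intros HL H1 H2; apply (has_deriv_within_unique (left_hl Lam) f); auto; [unfold left_hl; lra|].
  intros d Hd; exists (- Lam - d / 2); unfold left_hl; split; [lra|split; [lra|]].
  rewrite Rabs_left by lra; lra.
Qed.

Lemma has_deriv_within_unique_right Lam f d1 d2 : 0 < Lam ->
  has_deriv_within (right_hl Lam) f d1 -> has_deriv_within (right_hl Lam) f d2 -> d1 Lam = d2 Lam.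
Proof.
  intros HL H1 H2; apply (has_deriv_within_unique (right_hl Lam) f); auto; [unfold right_hl; lra|].
  intros d Hd; exists (Lam + d / 2); unfold right_hl; split; [lra|split; [lra|]].
  rewrite Rabs_right by lra; lra.
Qed.

(** * Complex exponentials *)

Definition zexp (B : Cplx) (r w x : R) : Cplx := Cmul B (Cmul (RtoC (exp (r * x))) (Cexpi (w * x))).
Definition zexp' (B : Cplx) (r w : R) : R -> Cplx := zexp (Cmul B (mkC r w)) r w.

Definition Cnorm1 (z : Cplx) : R := Rabs (Re z) + Rabs (Im z).

Lemma Cnorm1_ge0 z : 0 <= Cnorm1 z.
Proof. unfold Cnorm1; pose proof (Rabs_pos (Re z)); pose proof (Rabs_pos (Im z)); lra. Qed.

Lemma zexp_scale c B r w x : zexp (Cmul c B) r w x = Cmul c (zexp B r w x).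
Proof. unfold zexp; ring. Qed.

Lemma zexp'_scale c B r w x : zexp' (Cmul c B) r w x = Cmul c (zexp' B r w x).
Proof. unfold zexp', zexp; ring. Qed.

Lemma Re_zexp B r w x : Re (zexp B r w x) = exp (r * x) * (Re B * cos (w * x) - Im B * sin (w * x)).
Proof. unfold zexp; simpl; ring. Qed.

Lemma Im_zexp B r w x : Im (zexp B r w x) = exp (r * x) * (Re B * sin (w * x) + Im B * cos (w * x)).
Proof. unfold zexp; simpl; ring. Qed.

Lemma Cnorm2_zexp B r w x : Cnorm2 (zexp B r w x) = Cnorm2 B * (exp (r * x) * exp (r * x)).
Proof. unfold zexp; rewrite !Cnorm2_mul, Cnorm2_Cexpi; unfold Cnorm2; simpl; ring. Qed.

Lemma derivable_pt_lim_Re_zexp B r w x : derivable_pt_lim (fun y => Re (zexp B r w y)) x (Re (zexp' B r w x)).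
Proof.
  apply is_derive_Reals, (is_derive_ext (fun y => exp (r * y) * (Re B * cos (w * y) - Im B * sin (w * y)))).
  { intro t; rewrite Re_zexp; reflexivity. }
  auto_derive; auto; unfold zexp', zexp; simpl; ring.
Qed.

Lemma derivable_pt_lim_Im_zexp B r w x : derivable_pt_lim (fun y => Im (zexp B r w y)) x (Im (zexp' B r w x)).
Proof.
  apply is_derive_Reals, (is_derive_ext (fun y => exp (r * y) * (Re B * sin (w * y) + Im B * cos (w * y)))).
  { intro t; rewrite Im_zexp; reflexivity. }
  auto_derive; auto; unfold zexp', zexp; simpl; ring.
Qed.

Lemma Rabs_lin_trig_le u v c s : -1 <= c <= 1 -> -1 <= s <= 1 -> Rabs (u * c + v * s) <= Rabs u + Rabs v.
Proof.
  intros Hc Hs; eapply Rle_trans; [apply Rabs_triang|]; rewrite !Rabs_mult.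
  assert (Rabs c <= 1) by (apply Rabs_le; lra); assert (Rabs s <= 1) by (apply Rabs_le; lra).
  pose proof (Rabs_pos u); pose proof (Rabs_pos v); pose proof (Rabs_pos c); pose proof (Rabs_pos s); nra.
Qed.

Lemma Rabs_Re_zexp_le B r w x : Rabs (Re (zexp B r w x)) <= Cnorm1 B * exp (r * x).
Proof.
  rewrite Re_zexp, Rabs_mult, (Rabs_right (exp _)), Rmult_comm by (left; apply exp_pos).
  apply Rmult_le_compat_r; [left; apply exp_pos|]; unfold Cnorm1; rewrite <- (Rabs_Ropp (Im B)).
  replace (Re B * cos (w * x) - Im B * sin (w * x)) with (Re B * cos (w * x) + - Im B * sin (w * x)) by ring.
  apply Rabs_lin_trig_le; [apply COS_bound | apply SIN_bound].
Qed.

Lemma Rabs_Im_zexp_le B r w x : Rabs (Im (zexp B r w x)) <= Cnorm1 B * exp (r * x).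
Proof.
  rewrite Im_zexp, Rabs_mult, (Rabs_right (exp _)), Rmult_comm by (left; apply exp_pos).
  apply Rmult_le_compat_r; [left; apply exp_pos|].
  apply Rabs_lin_trig_le; [apply SIN_bound | apply COS_bound].
Qed.

Lemma exp_le_exp_of_le x y : x <= y -> exp x <= exp y.
Proof. intros [H | ->]; [left; apply exp_increasing, H | right; reflexivity]. Qed.

Lemma exp_le_between r lo hi x : lo <= x <= hi -> exp (r * x) <= exp (r * lo) + exp (r * hi).
Proof.
  intros Hx; pose proof (exp_pos (r * lo)); pose proof (exp_pos (r * hi)).
  destruct (Rle_dec 0 r).
  - assert (exp (r * x) <= exp (r * hi)) by (apply exp_le_exp_of_le; nra); lra.
  - assert (exp (r * x) <= exp (r * lo)) by (apply exp_le_exp_of_le; nra); lra.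
Qed.

Lemma Rabs_diff_le_of_deriv f f' h h' a b : a <= b -> (forall x, derivable_pt_lim f x (f' x)) ->
  (forall x, derivable_pt_lim h x (h' x)) -> (forall x, a <= x <= b -> Rabs (f' x) <= h' x) ->
  Rabs (f b - f a) <= h b - h a.
Proof.
  intros Hab Hf Hh Hb; destruct (Req_dec a b) as [<- | Hne].
  { replace (f a - f a) with 0 by ring; rewrite Rabs_R0; lra. }
  destruct (MVT_cor2 (fun x => h x - f x) (fun x => h' x - f' x) a b ltac:(lra)) as (c1 & E1 & H1).
  { intros c _; apply derivable_pt_lim_minus; auto. }
  destruct (MVT_cor2 (fun x => h x + f x) (fun x => h' x + f' x) a b ltac:(lra)) as (c2 & E2 & H2).
  { intros c _; apply derivable_pt_lim_plus; auto. }
  specialize (Hb c1 ltac:(lra)) as B1; specialize (Hb c2 ltac:(lra)) as B2.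
  apply Rabs_le_between in B1; apply Rabs_le_between in B2.
  apply Rabs_le; split; nra.
Qed.

Lemma exp_div_diff_ge0 r a b : r <> 0 -> a <= b -> 0 <= exp (r * b) / r - exp (r * a) / r.
Proof.
  intros Hr Hab.
  enough (Rabs (0 - 0) <= exp (r * b) / r - exp (r * a) / r) by (pose proof (Rabs_pos (0 - 0)); lra).
  apply (Rabs_diff_le_of_deriv (fun _ => 0) (fun _ => 0) (fun x => exp (r * x) / r) (fun x => exp (r * x)));
    auto.
  - intro x; apply derivable_pt_lim_const.
  - intro x; apply is_derive_Reals; auto_derive; auto; field; auto.
  - intros x _; rewrite Rabs_R0; left; apply exp_pos.
Qed.

Lemma exp_div_diff_le r a b : r <> 0 -> a <= b ->
  exp (r * b) / r - exp (r * a) / r <= (exp (r * a) + exp (r * b)) * (b - a).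
Proof.
  intros Hr Hab; set (M := exp (r * a) + exp (r * b)).
  enough (Rabs (exp (r * b) / r - exp (r * a) / r) <= M * b - M * a)
    by (pose proof (Rle_abs (exp (r * b) / r - exp (r * a) / r)); lra).
  apply (Rabs_diff_le_of_deriv (fun x => exp (r * x) / r) (fun x => exp (r * x)) (fun x => M * x) (fun _ => M));
    auto.
  - intro x; apply is_derive_Reals; auto_derive; auto; field; auto.
  - intro x; apply is_derive_Reals; auto_derive; auto; ring.
  - intros x Hx; rewrite Rabs_right by (left; apply exp_pos); apply exp_le_between; auto.
Qed.

Lemma Cmod_zexp_diff_le B r w a b : r <> 0 -> a <= b ->
  Cmod (Csub (zexp B r w b) (zexp B r w a)) <=
  2 * Cnorm1 (Cmul B (mkC r w)) * (exp (r * b) / r - exp (r * a) / r).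
Proof.
  intros Hr Hab; set (K := Cnorm1 (Cmul B (mkC r w))); pose proof (Cnorm1_ge0 (Cmul B (mkC r w))).
  assert (Hh : forall x, derivable_pt_lim (fun x => K * exp (r * x) / r) x (K * exp (r * x))).
  { intro x; apply is_derive_Reals; auto_derive; auto; field; auto. }
  assert (HRe : Rabs (Re (zexp B r w b) - Re (zexp B r w a)) <= K * exp (r * b) / r - K * exp (r * a) / r).
  { apply (Rabs_diff_le_of_deriv _ (fun x => Re (zexp' B r w x)) _ _ a b Hab
             (derivable_pt_lim_Re_zexp B r w) Hh).
    intros x _; apply Rabs_Re_zexp_le. }
  assert (HIm : Rabs (Im (zexp B r w b) - Im (zexp B r w a)) <= K * exp (r * b) / r - K * exp (r * a) / r).
  { apply (Rabs_diff_le_of_deriv _ (fun x => Im (zexp' B r w x)) _ _ a b Hab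
             (derivable_pt_lim_Im_zexp B r w) Hh).
    intros x _; apply Rabs_Im_zexp_le. }
  eapply Rle_trans; [apply Cmod_le_Rabs_Re_Im|]; rewrite Re_Csub, Im_Csub.
  replace (2 * K * (exp (r * b) / r - exp (r * a) / r))
    with (2 * (K * exp (r * b) / r - K * exp (r * a) / r)) by (field; auto).
  lra.
Qed.

Lemma has_deriv_within_of_components S f df :
  (forall x, derivable_pt_lim (fun y => Re (f y)) x (Re (df x))) ->
  (forall x, derivable_pt_lim (fun y => Im (f y)) x (Im (df x))) -> has_deriv_within S f df.
Proof.
  assert (Hlin : forall g x l eps, derivable_pt_lim g x l -> 0 < eps -> exists d, 0 < d /\
            forall y, Rabs (y - x) < d -> Rabs (g y - g x - l * (y - x)) <= eps * Rabs (y - x)).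
  { intros g x l eps H He; destruct (H eps He) as [d Hd]; exists d; split; [apply cond_pos|].
    intros y Hy; destruct (Req_dec y x) as [-> | Hne].
    { replace (g x - g x - l * (x - x)) with 0 by ring; rewrite Rabs_R0.
      pose proof (Rabs_pos (x - x)); nra. }
    specialize (Hd (y - x) ltac:(lra) Hy); replace (x + (y - x)) with y in Hd by ring.
    replace (g y - g x - l * (y - x)) with (((g y - g x) / (y - x) - l) * (y - x)) by (field; lra).
    rewrite Rabs_mult; apply Rmult_le_compat_r; [apply Rabs_pos | lra]. }
  intros HRe HIm x _ eps He.
  destruct (Hlin _ _ _ (eps / 2) (HRe x) ltac:(lra)) as (d1 & Hd1 & H1).
  destruct (Hlin _ _ _ (eps / 2) (HIm x) ltac:(lra)) as (d2 & Hd2 & H2).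
  exists (Rmin d1 d2); split; [apply Rmin_pos; auto|]; intros y _ Hy.
  pose proof (Rmin_l d1 d2); pose proof (Rmin_r d1 d2).
  specialize (H1 y ltac:(lra)); specialize (H2 y ltac:(lra)).
  eapply Rle_trans; [apply Cmod_le_Rabs_Re_Im|]; simpl.
  replace (Re (f y) + - Re (f x) + - (Re (df x) * (y - x) - Im (df x) * 0))
    with (Re (f y) - Re (f x) - Re (df x) * (y - x)) by ring.
  replace (Im (f y) + - Im (f x) + - (Re (df x) * 0 + Im (df x) * (y - x)))
    with (Im (f y) - Im (f x) - Im (df x) * (y - x)) by ring.
  lra.
Qed.

Lemma has_deriv_within_zexp S B r w : has_deriv_within S (zexp B r w) (zexp' B r w).
Proof.
  apply has_deriv_within_of_components; intro x;
    [apply derivable_pt_lim_Re_zexp | apply derivable_pt_lim_Im_zexp].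
Qed.

Lemma loc_abs_cont_zexp S B r w : r <> 0 -> loc_abs_cont S (zexp B r w).
Proof.
  intros Hr lo hi _ _ Hlh eps He.
  set (K := Cnorm1 (Cmul B (mkC r w))); pose proof (Cnorm1_ge0 (Cmul B (mkC r w))) as HK; fold K in HK.
  set (M := 4 * K * (exp (r * lo) + exp (r * hi))).
  assert (HM : 0 <= M) by (pose proof (exp_pos (r * lo)); pose proof (exp_pos (r * hi)); unfold M; nra).
  exists (eps / (M + 1)); split; [apply Rdiv_lt_0_compat; lra|]; intros l Ho Hl Ht.
  assert (Hlip : forall a b, lo <= a -> a <= b -> b <= hi ->
            Cmod (Csub (zexp B r w b) (zexp B r w a)) <= M * (b - a)).
  { intros a b Ha Hab Hb; eapply Rle_trans; [apply Cmod_zexp_diff_le; auto|]; fold K.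
    pose proof (exp_div_diff_le r a b Hr Hab).
    pose proof (exp_le_between r lo hi a ltac:(lra)); pose proof (exp_le_between r lo hi b ltac:(lra)).
    assert (Hsum : (exp (r * a) + exp (r * b)) * (b - a) <= 2 * (exp (r * lo) + exp (r * hi)) * (b - a))
      by (apply Rmult_le_compat_r; lra).
    unfold M; nra. }
  assert (HV : variation (zexp B r w) l <= M * total_length l).
  { pose proof (Forall_and _ _ _ (ordered_intervals_bounds _ _ Ho) Hl) as Hin; clear -Hin Hlip.
    induction Hin as [|[a b] l Hab _ IH]; simpl in *; [lra|].
    pose proof (Hlip a b ltac:(lra) ltac:(lra) ltac:(lra)); lra. }
  pose proof (total_length_ge0 _ _ Ho).
  assert (total_length l * (M + 1) < eps).
  { apply (Rmult_lt_compat_r (M + 1)) in Ht; [|lra].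
    replace (eps / (M + 1) * (M + 1)) with eps in Ht by (field; lra); exact Ht. }
  nra.
Qed.

Lemma Rabs_exp_sqr_div_le r x : r <> 0 -> r * x <= 0 ->
  Rabs (exp (r * x) * exp (r * x) / (2 * r)) <= 1 / (2 * Rabs r).
Proof.
  intros Hr Hx; assert (exp (r * x) <= 1) by (rewrite <- exp_0; apply exp_le_exp_of_le; lra).
  pose proof (exp_pos (r * x)).
  assert (Hq : 0 < exp (r * x) * exp (r * x) <= 1) by (split; nra).
  assert (0 < Rabs r) by (apply Rabs_pos_lt, Hr).
  unfold Rdiv; rewrite Rabs_mult, Rabs_inv, (Rabs_mult 2 r), (Rabs_right 2), (Rabs_right (_ * _)) by lra.
  apply Rmult_le_compat_r; [left; apply Rinv_0_lt_compat|]; lra.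
Qed.

Section DecayingExponential.

Variables (S : R -> Prop) (B : Cplx) (r w : R).
Hypotheses (r_neq0 : r <> 0) (decay : forall x, S x -> r * x <= 0).

Lemma square_integrable_on_zexp : square_integrable_on S (zexp B r w).
Proof.
  exists (Cnorm2 B * (1 / Rabs r)); intros a b Ha Hb Hab.
  set (G := fun x => Cnorm2 B * (exp (r * x) * exp (r * x) / (2 * r))).
  assert (I : is_RInt (fun x => Cnorm2 (zexp B r w x)) a b (G b - G a)).
  { apply (is_RInt_ext (fun x => Cnorm2 B * (exp (r * x) * exp (r * x)))).
    { intros x _; rewrite Cnorm2_zexp; reflexivity. }
    apply (@is_RInt_derive R_CompleteNormedModule G).
    - intros x _; unfold G; auto_derive; auto; field; auto.
    - intros x _; apply (@ex_derive_continuous R_AbsRing R_NormedModule); auto_derive; auto. }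
  assert (Ex : ex_RInt (fun x => Cnorm2 (zexp B r w x)) a b) by (eexists; exact I).
  exists (ex_RInt_Reals_0 _ _ _ Ex); rewrite <- RInt_Reals, (is_RInt_unique _ _ _ _ I).
  pose proof (Rabs_exp_sqr_div_le r a r_neq0 (decay a Ha)) as Ga.
  pose proof (Rabs_exp_sqr_div_le r b r_neq0 (decay b Hb)) as Gb.
  apply Rabs_le_between in Ga; apply Rabs_le_between in Gb; pose proof (Cnorm2_ge0 B).
  assert (0 < Rabs r) by (apply Rabs_pos_lt, r_neq0).
  replace (1 / Rabs r) with (1 / (2 * Rabs r) + 1 / (2 * Rabs r)) by (field; lra).
  unfold G, minus, plus, opp; simpl; nra.
Qed.

Lemma riesz_sum_telescope (T : R * R -> R) (G : R -> R) U c l : 0 <= U ->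
  (forall a b, S a -> S b -> a < b -> T (a, b) <= G b - G a) -> (forall a b, a <= b -> G a <= G b) ->
  (forall x, S x -> Rabs (G x) <= U) -> ordered_intervals c l ->
  Forall (fun p => S (fst p) /\ S (snd p)) l -> fold_right (fun p s => T p + s) 0 l <= 2 * U.
Proof.
  intros HU HT HG HB Ho Hl.
  assert (Claim : forall l c, S c -> ordered_intervals c l -> Forall (fun p => S (fst p) /\ S (snd p)) l ->
            fold_right (fun p s => T p + s) 0 l <= U - G c).
  { clear c l Ho Hl; induction l as [|[a b] l IH]; intros c Sc Ho Hl; simpl.
    - pose proof (HB c Sc) as Hc; apply Rabs_le_between in Hc; lra.
    - destruct Ho as (H1 & H2 & H3); inversion Hl as [|? ? [Sa Sb] Hl']; subst.
      specialize (IH b Sb H3 Hl'); pose proof (HT a b Sa Sb H2); pose proof (HG c a H1); lra. }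
  destruct l as [|[a b] l]; simpl; [lra|].
  inversion Hl as [|? ? [Sa Sb] _]; subst.
  assert (Ho' : ordered_intervals a ((a, b) :: l)) by (simpl in Ho |- *; intuition lra).
  pose proof (Claim ((a, b) :: l) a Sa Ho' Hl); simpl in *.
  pose proof (HB a Sa) as Ha; apply Rabs_le_between in Ha; lra.
Qed.

Lemma deriv_square_integrable_on_zexp : deriv_square_integrable_on S (zexp B r w).
Proof.
  set (K := Cnorm1 (Cmul B (mkC r w))); pose proof (Cnorm1_ge0 (Cmul B (mkC r w))) as HK; fold K in HK.
  set (D := fun a b => exp (r * b) / r - exp (r * a) / r).
  set (G := fun x => 8 * (K * K) * (exp (r * x) * exp (r * x) / (2 * r))).
  set (U := 8 * (K * K) * (1 / (2 * Rabs r))).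
  assert (HG : forall a b, G b - G a = 4 * (K * K) * D a b * (exp (r * a) + exp (r * b)))
    by (intros; unfold G, D; field; auto).
  assert (0 < Rabs r) by (apply Rabs_pos_lt, r_neq0).
  exists (2 * U); intros c l Ho Hl; unfold riesz2_sum.
  apply (riesz_sum_telescope (fun p => Cnorm2 (Csub (zexp B r w (snd p)) (zexp B r w (fst p))) / (snd p - fst p))
           G U c l); auto.
  - unfold U; apply Rmult_le_pos; [nra|]; unfold Rdiv; rewrite Rmult_1_l; left; apply Rinv_0_lt_compat; lra.
  - (* |Δ|^2 <= 4 K^2 D^2 and D <= (e^{ra} + e^{rb})(b - a) *)
    intros a b _ _ Hab; simpl; rewrite HG.
    pose proof (exp_div_diff_ge0 r a b r_neq0 ltac:(lra)) as HD0.
    pose proof (exp_div_diff_le r a b r_neq0 ltac:(lra)) as HD1.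
    pose proof (Cmod_zexp_diff_le B r w a b r_neq0 ltac:(lra)) as HC.
    fold K (D a b) in HD0, HD1, HC.
    pose proof (Cmod_ge0 (Csub (zexp B r w b) (zexp B r w a))).
    rewrite <- Cmod_sqr; apply Rle_div_l; [lra|].
    assert (D a b * D a b <= D a b * ((exp (r * a) + exp (r * b)) * (b - a)))
      by (apply Rmult_le_compat_l; auto).
    assert (0 <= K * K) by nra.
    nra.
  - intros a b Hab; enough (0 <= G b - G a) by lra; rewrite HG.
    pose proof (exp_div_diff_ge0 r a b r_neq0 Hab); pose proof (exp_pos (r * a)); pose proof (exp_pos (r * b)).
    unfold D; apply Rmult_le_pos; [apply Rmult_le_pos; nra | lra].
  - intros x Hx; unfold G, U; rewrite Rabs_mult, (Rabs_right (8 * (K * K))) by nra.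
    apply Rmult_le_compat_l; [nra|]; apply Rabs_exp_sqr_div_le; auto.
Qed.

End DecayingExponential.

Lemma Hstar_on_zexp S B r w : r <> 0 -> (forall x, S x -> r * x <= 0) ->
  Hstar_on S (zexp B r w) (zexp' B r w).
Proof.
  intros Hr Hdecay; split; [|split; [|split; [|split]]].
  - apply has_deriv_within_zexp.
  - apply loc_abs_cont_zexp, Hr.
  - apply loc_abs_cont_zexp, Hr.
  - apply square_integrable_on_zexp; assumption.
  - apply deriv_square_integrable_on_zexp; assumption.
Qed.

(** * Polar form *)

Definition polar (m a : R) : Cplx := Cmul (RtoC m) (Cexpi a).

Lemma Cexpi_add x y : Cexpi (x + y) = Cmul (Cexpi x) (Cexpi y).
Proof. unfold Cexpi; apply Cplx_ext; simpl; [rewrite cos_plus | rewrite sin_plus]; ring. Qed.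

Lemma Cexpi_mul_polar a m b : Cmul (Cexpi a) (polar m b) = polar m (a + b).
Proof. unfold polar; rewrite Cexpi_add; ring. Qed.

Lemma polar_mul m a n b : Cmul (polar m a) (polar n b) = polar (m * n) (a + b).
Proof. unfold polar; rewrite Cexpi_add, RtoC_mult; ring. Qed.

Lemma Copp_Cexpi a : Copp (Cexpi a) = Cexpi (a + PI).
Proof. unfold Cexpi; rewrite neg_cos, neg_sin; reflexivity. Qed.

Lemma polar_2PI m a : polar m (a + 2 * PI) = polar m a.
Proof.
  unfold polar; rewrite Cexpi_add.
  replace (Cexpi (2 * PI)) with C1 by (unfold Cexpi; rewrite cos_2PI, sin_2PI; reflexivity); ring.
Qed.

Lemma Cnorm2_polar m a : Cnorm2 (polar m a) = m * m.
Proof. unfold polar; rewrite Cnorm2_mul, Cnorm2_Cexpi; unfold Cnorm2; simpl; ring. Qed.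

Lemma polar_neq0 m a : m <> 0 -> polar m a <> C0.
Proof.
  intros Hm H; apply Hm; pose proof (Cnorm2_polar m a) as Hn.
  rewrite H in Hn; unfold Cnorm2 in Hn; simpl in Hn; nra.
Qed.

Lemma Cmul_neq0 z w : z <> C0 -> w <> C0 -> Cmul z w <> C0.
Proof.
  intros Hz Hw H; assert (Hn : Cnorm2 z * Cnorm2 w = 0).
  { rewrite <- Cnorm2_mul, H; unfold Cnorm2; simpl; ring. }
  destruct (Rmult_integral _ _ Hn) as [H0 | H0]; [apply Hz | apply Hw]; apply Cnorm2_eq0, H0.
Qed.

Lemma zexp_polar m a r w x : zexp (polar m a) r w x = polar (m * exp (r * x)) (a + w * x).
Proof. unfold zexp, polar; rewrite Cexpi_add, RtoC_mult; ring. Qed.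

Lemma zexp'_polar m a r w mu x : mkC r w = Cexpi mu ->
  zexp' (polar m a) r w x = polar (m * exp (r * x)) (a + mu + w * x).
Proof. intro H; unfold zexp', zexp, polar; rewrite H, !Cexpi_add, RtoC_mult; ring. Qed.

Definition inv_sqrt2 : R := / sqrt 2.

Lemma div_sqrt2 x : x / sqrt 2 = inv_sqrt2 * x.
Proof. unfold inv_sqrt2, Rdiv; ring. Qed.

Lemma inv_sqrt2_pos : 0 < inv_sqrt2.
Proof. apply Rinv_0_lt_compat, sqrt_lt_R0; lra. Qed.

Lemma sqrt2_mult Lam : sqrt 2 * Lam = 2 * (inv_sqrt2 * Lam).
Proof.
  assert (H2 : sqrt 2 * sqrt 2 = 2) by (apply sqrt_sqrt; lra).
  assert (sqrt 2 <> 0) by (apply Rgt_not_eq, sqrt_lt_R0; lra).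
  unfold inv_sqrt2; rewrite <- H2 at 2; field; assumption.
Qed.

Lemma Cexpi_PI4 : Cexpi (PI / 4) = mkC inv_sqrt2 inv_sqrt2.
Proof. unfold Cexpi, inv_sqrt2; rewrite cos_PI4, sin_PI4; unfold Rdiv; rewrite Rmult_1_l; reflexivity. Qed.

Lemma Cexpi_neg_PI4 : Cexpi (- (PI / 4)) = mkC inv_sqrt2 (- inv_sqrt2).
Proof.
  unfold Cexpi, inv_sqrt2; rewrite cos_neg, sin_neg, cos_PI4, sin_PI4; unfold Rdiv; rewrite Rmult_1_l.
  reflexivity.
Qed.

Lemma Cexpi_3PI4 : Cexpi (3 * (PI / 4)) = mkC (- inv_sqrt2) inv_sqrt2.
Proof. unfold Cexpi, inv_sqrt2; rewrite cos_3PI4, sin_3PI4; apply Cplx_ext; simpl; field; apply sqrt2_neq_0. Qed.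

Lemma Cexpi_neg_3PI4 : Cexpi (- (3 * (PI / 4))) = mkC (- inv_sqrt2) (- inv_sqrt2).
Proof.
  unfold Cexpi, inv_sqrt2; rewrite cos_neg, sin_neg, cos_3PI4, sin_3PI4.
  apply Cplx_ext; simpl; field; apply sqrt2_neq_0.
Qed.

(** * The functions spanning [D_gamma] modulo [D(H_0)] *)

Definition phase_to (Lam theta : R) : R := theta + sqrt 2 * Lam + 3 * PI / 4.
Definition phase_from (Lam theta : R) : R := - theta + sqrt 2 * Lam + 3 * PI / 4.

Definition basisL (Lam theta : R) (x : R) : Cplx :=
  Cadd (Lplus Lam x) (Cmul (gamma_to Lam theta) (Defs.Rminus Lam x)).
Definition basisR (Lam theta : R) (x : R) : Cplx :=
  Cadd (Defs.Rplus Lam x) (Cmul (gamma_from Lam theta) (Lminus Lam x)).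

Definition basisL' (Lam theta : R) (x : R) : Cplx :=
  if Rlt_dec x 0 then zexp' (polar (Nc Lam) 0) inv_sqrt2 (- inv_sqrt2) x
  else zexp' (polar (Nc Lam) (phase_to Lam theta)) (- inv_sqrt2) (- inv_sqrt2) x.
Definition basisR' (Lam theta : R) (x : R) : Cplx :=
  if Rlt_dec x 0 then zexp' (polar (Nc Lam) (phase_from Lam theta)) inv_sqrt2 inv_sqrt2 x
  else zexp' (polar (Nc Lam) 0) (- inv_sqrt2) inv_sqrt2 x.

Definition lin_comb (f u v : R -> Cplx) (cu cv : Cplx) : R -> Cplx :=
  fun x => Cadd (f x) (Cadd (Cmul cu (u x)) (Cmul cv (v x))).

Definition alpha_bc (Lam : R) (a2 a3 : Cplx) (f df : R -> Cplx) : Prop :=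
  f Lam = Cmul a2 (df (- Lam)) /\ df Lam = Cmul a3 (f (- Lam)).

Lemma alpha_bc_lin_comb Lam a2 a3 f df u du v dv cu cv : alpha_bc Lam a2 a3 f df ->
  alpha_bc Lam a2 a3 u du -> alpha_bc Lam a2 a3 v dv ->
  alpha_bc Lam a2 a3 (lin_comb f u v cu cv) (lin_comb df du dv cu cv).
Proof. intros [F2 F3] [U2 U3] [V2 V3]; unfold lin_comb; split; rewrite F2, U2, V2 || rewrite F3, U3, V3; ring. Qed.

Lemma alpha_bc_of_vanishing Lam a2 a3 f df : f Lam = C0 -> f (- Lam) = C0 ->
  df Lam = C0 -> df (- Lam) = C0 -> alpha_bc Lam a2 a3 f df.
Proof. intros H1 H2 H3 H4; unfold alpha_bc; rewrite H1, H2, H3, H4; split; ring. Qed.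

Lemma Hstar_with_ext Lam f g df : 0 < Lam -> Hstar_with Lam f df ->
  (forall x, Lam <= Rabs x -> f x = g x) -> Hstar_with Lam g df.
Proof.
  intros HL [Hl Hr] E; split.
  - apply (Hstar_on_ext _ (left_hl_convex Lam) f df); auto; unfold left_hl; intros x Hx.
    apply E; rewrite Rabs_left1; lra.
  - apply (Hstar_on_ext _ (right_hl_convex Lam) f df); auto; unfold right_hl; intros x Hx.
    apply E; rewrite Rabs_right; lra.
Qed.

Lemma Hstar_with_zero Lam : 0 <= Lam -> Hstar_with Lam (fun _ => C0) (fun _ => C0).
Proof.
  intro HL.
  assert (Hzero : forall r x, zexp C0 r 0 x = C0) by (intros; unfold zexp; ring).
  assert (Hzero' : forall r x, zexp' C0 r 0 x = C0) by (intros; unfold zexp', zexp; ring).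
  split.
  - apply (Hstar_on_ext _ (left_hl_convex Lam) (zexp C0 1 0) (zexp' C0 1 0)); auto.
    apply Hstar_on_zexp; [lra | unfold left_hl; intros x Hx; lra].
  - apply (Hstar_on_ext _ (right_hl_convex Lam) (zexp C0 (-1) 0) (zexp' C0 (-1) 0)); auto.
    apply Hstar_on_zexp; [lra | unfold right_hl; intros x Hx; lra].
Qed.

Lemma Cplx_cramer p q u v X Y : Csub (Cmul p v) (Cmul q u) <> C0 ->
  exists cL cR, Cadd (Cmul cL p) (Cmul cR q) = X /\ Cadd (Cmul cL u) (Cmul cR v) = Y.
Proof.
  set (W := Csub (Cmul p v) (Cmul q u)); intro HW.
  set (J := mkC (Re W / Cnorm2 W) (- Im W / Cnorm2 W)).
  assert (HJ : Cmul W J = C1).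
  { assert (Cnorm2 W <> 0) by (intro H; apply HW, Cnorm2_eq0, H).
    unfold J; destruct W as [a b]; unfold Cnorm2 in *; apply Cplx_ext; simpl in *; field; assumption. }
  exists (Cmul (Csub (Cmul X v) (Cmul q Y)) J), (Cmul (Csub (Cmul p Y) (Cmul u X)) J); split.
  - transitivity (Cmul X (Cmul W J)); [unfold W; ring | rewrite HJ; ring].
  - transitivity (Cmul Y (Cmul W J)); [unfold W; ring | rewrite HJ; ring].
Qed.

Section Basis.

Variables (Lam theta : R).
Hypothesis Lam_pos : 0 < Lam.

Let bL := basisL Lam theta.
Let bR := basisR Lam theta.
Let bL' := basisL' Lam theta.
Let bR' := basisR' Lam theta.

Lemma basisL_left x : x < 0 -> bL x = zexp (polar (Nc Lam) 0) inv_sqrt2 (- inv_sqrt2) x.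
Proof.
  intro Hx; unfold bL, basisL, Lplus, Defs.Rminus, zexp, polar, gamma_to, phase_to.
  destruct (Rlt_dec x 0); [|lra]; destruct (Rlt_dec 0 x); [lra|].
  rewrite !div_sqrt2; replace (inv_sqrt2 * - x) with (- inv_sqrt2 * x) by ring.
  apply Cplx_ext; simpl; rewrite cos_0, sin_0; ring.
Qed.

Lemma basisL_right x : 0 < x -> bL x = zexp (polar (Nc Lam) (phase_to Lam theta)) (- inv_sqrt2) (- inv_sqrt2) x.
Proof.
  intro Hx; unfold bL, basisL, Lplus, Defs.Rminus, zexp, polar, gamma_to, phase_to.
  destruct (Rlt_dec x 0); [lra|]; destruct (Rlt_dec 0 x); [|lra].
  rewrite div_sqrt2; replace (inv_sqrt2 * - x) with (- inv_sqrt2 * x) by ring.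
  apply Cplx_ext; simpl; ring.
Qed.

Lemma basisR_left x : x < 0 -> bR x = zexp (polar (Nc Lam) (phase_from Lam theta)) inv_sqrt2 inv_sqrt2 x.
Proof.
  intro Hx; unfold bR, basisR, Lminus, Defs.Rplus, zexp, polar, gamma_from, phase_from.
  destruct (Rlt_dec x 0); [|lra]; destruct (Rlt_dec 0 x); [lra|].
  rewrite !div_sqrt2; apply Cplx_ext; simpl; ring.
Qed.

Lemma basisR_right x : 0 < x -> bR x = zexp (polar (Nc Lam) 0) (- inv_sqrt2) inv_sqrt2 x.
Proof.
  intro Hx; unfold bR, basisR, Lminus, Defs.Rplus, zexp, polar, gamma_from, phase_from.
  destruct (Rlt_dec x 0); [lra|]; destruct (Rlt_dec 0 x); [|lra].
  rewrite !div_sqrt2; replace (inv_sqrt2 * - x) with (- inv_sqrt2 * x) by ring.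
  apply Cplx_ext; simpl; rewrite cos_0, sin_0; ring.
Qed.

Lemma basisL'_left x : x < 0 -> bL' x = zexp' (polar (Nc Lam) 0) inv_sqrt2 (- inv_sqrt2) x.
Proof. intro; unfold bL', basisL'; destruct (Rlt_dec x 0); [reflexivity | lra]. Qed.

Lemma basisL'_right x : 0 < x -> bL' x = zexp' (polar (Nc Lam) (phase_to Lam theta)) (- inv_sqrt2) (- inv_sqrt2) x.
Proof. intro; unfold bL', basisL'; destruct (Rlt_dec x 0); [lra | reflexivity]. Qed.

Lemma basisR'_left x : x < 0 -> bR' x = zexp' (polar (Nc Lam) (phase_from Lam theta)) inv_sqrt2 inv_sqrt2 x.
Proof. intro; unfold bR', basisR'; destruct (Rlt_dec x 0); [reflexivity | lra]. Qed.

Lemma basisR'_right x : 0 < x -> bR' x = zexp' (polar (Nc Lam) 0) (- inv_sqrt2) inv_sqrt2 x.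
Proof. intro; unfold bR', basisR'; destruct (Rlt_dec x 0); [lra | reflexivity]. Qed.

Lemma Hstar_on_scaled_piece S c B r w f df : convex S -> r <> 0 -> (forall x, S x -> r * x <= 0) ->
  (forall x, S x -> f x = zexp B r w x) -> (forall x, S x -> df x = zexp' B r w x) ->
  Hstar_on S (fun x => Cmul c (f x)) (fun x => Cmul c (df x)).
Proof.
  intros HS Hr Hdecay Hf Hdf.
  apply (Hstar_on_ext S HS (zexp (Cmul c B) r w) (zexp' (Cmul c B) r w)).
  - apply Hstar_on_zexp; assumption.
  - intros x Hx; rewrite zexp_scale, Hf; auto.
  - intros x Hx; rewrite zexp'_scale, Hdf; auto.
Qed.

Lemma Hstar_on_left_basis c d :
  Hstar_on (left_hl Lam) (Fadd (fun x => Cmul c (bL x)) (fun x => Cmul d (bR x)))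
                         (Fadd (fun x => Cmul c (bL' x)) (fun x => Cmul d (bR' x))).
Proof.
  pose proof inv_sqrt2_pos; apply (Hstar_on_add _ (left_hl_convex Lam)).
  - apply (Hstar_on_scaled_piece _ c (polar (Nc Lam) 0) inv_sqrt2 (- inv_sqrt2));
      [apply left_hl_convex | lra | ..]; unfold left_hl; intros x Hx;
      [nra | apply basisL_left | apply basisL'_left]; lra.
  - apply (Hstar_on_scaled_piece _ d (polar (Nc Lam) (phase_from Lam theta)) inv_sqrt2 inv_sqrt2);
      [apply left_hl_convex | lra | ..]; unfold left_hl; intros x Hx;
      [nra | apply basisR_left | apply basisR'_left]; lra.
Qed.

Lemma Hstar_on_right_basis c d :
  Hstar_on (right_hl Lam) (Fadd (fun x => Cmul c (bL x)) (fun x => Cmul d (bR x)))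
                          (Fadd (fun x => Cmul c (bL' x)) (fun x => Cmul d (bR' x))).
Proof.
  pose proof inv_sqrt2_pos; apply (Hstar_on_add _ (right_hl_convex Lam)).
  - apply (Hstar_on_scaled_piece _ c (polar (Nc Lam) (phase_to Lam theta)) (- inv_sqrt2) (- inv_sqrt2));
      [apply right_hl_convex | lra | ..]; unfold right_hl; intros x Hx;
      [nra | apply basisL_right | apply basisL'_right]; lra.
  - apply (Hstar_on_scaled_piece _ d (polar (Nc Lam) 0) (- inv_sqrt2) inv_sqrt2);
      [apply right_hl_convex | lra | ..]; unfold right_hl; intros x Hx;
      [nra | apply basisR_right | apply basisR'_right]; lra.
Qed.

Lemma Hstar_with_lin_comb f df cL cR : Hstar_with Lam f df ->
  Hstar_with Lam (lin_comb f bL bR cL cR) (lin_comb df bL' bR' cL cR).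
Proof.
  intros [Hl Hr]; split.
  - apply (Hstar_on_add _ (left_hl_convex Lam)); [exact Hl | apply Hstar_on_left_basis].
  - apply (Hstar_on_add _ (right_hl_convex Lam)); [exact Hr | apply Hstar_on_right_basis].
Qed.

(* [Nc] makes every modulus at [±Lam] equal to [2^(1/4)] *)

Let k := Rpower 2 (1 / 4).

Lemma k_pos : 0 < k.
Proof. unfold k, Rpower; apply exp_pos. Qed.

Lemma Nc_exp_at_Lam : Nc Lam * exp (inv_sqrt2 * - Lam) = k.
Proof.
  unfold Nc, k; rewrite Rmult_assoc, <- exp_plus, div_sqrt2.
  replace (inv_sqrt2 * Lam + inv_sqrt2 * - Lam) with 0 by ring; rewrite exp_0; ring.
Qed.

Lemma Nc_exp_at_Lam' : Nc Lam * exp (- inv_sqrt2 * Lam) = k.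
Proof. rewrite <- Nc_exp_at_Lam; do 2 f_equal; ring. Qed.

Lemma basisL_at_neg_Lam : bL (- Lam) = polar k (0 + - inv_sqrt2 * - Lam).
Proof. rewrite basisL_left, zexp_polar, Nc_exp_at_Lam by lra; reflexivity. Qed.

Lemma basisL'_at_neg_Lam : bL' (- Lam) = polar k (0 + - (PI / 4) + - inv_sqrt2 * - Lam).
Proof.
  rewrite basisL'_left, (zexp'_polar _ _ _ _ _ _ (eq_sym Cexpi_neg_PI4)), Nc_exp_at_Lam by lra.
  reflexivity.
Qed.

Lemma basisL_at_Lam : bL Lam = polar k (phase_to Lam theta + - inv_sqrt2 * Lam).
Proof. rewrite basisL_right, zexp_polar, Nc_exp_at_Lam' by lra; reflexivity. Qed.

Lemma basisL'_at_Lam : bL' Lam = polar k (phase_to Lam theta + - (3 * (PI / 4)) + - inv_sqrt2 * Lam).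
Proof.
  rewrite basisL'_right, (zexp'_polar _ _ _ _ _ _ (eq_sym Cexpi_neg_3PI4)), Nc_exp_at_Lam' by lra.
  reflexivity.
Qed.

Lemma basisR_at_neg_Lam : bR (- Lam) = polar k (phase_from Lam theta + inv_sqrt2 * - Lam).
Proof. rewrite basisR_left, zexp_polar, Nc_exp_at_Lam by lra; reflexivity. Qed.

Lemma basisR'_at_neg_Lam : bR' (- Lam) = polar k (phase_from Lam theta + PI / 4 + inv_sqrt2 * - Lam).
Proof.
  rewrite basisR'_left, (zexp'_polar _ _ _ _ _ _ (eq_sym Cexpi_PI4)), Nc_exp_at_Lam by lra.
  reflexivity.
Qed.

Lemma basisR_at_Lam : bR Lam = polar k (0 + inv_sqrt2 * Lam).
Proof. rewrite basisR_right, zexp_polar, Nc_exp_at_Lam' by lra; reflexivity. Qed.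

Lemma basisR'_at_Lam : bR' Lam = polar k (0 + 3 * (PI / 4) + inv_sqrt2 * Lam).
Proof.
  rewrite basisR'_right, (zexp'_polar _ _ _ _ _ _ (eq_sym Cexpi_3PI4)), Nc_exp_at_Lam' by lra.
  reflexivity.
Qed.

Lemma basisL_bc : alpha_bc Lam (Copp (Cexpi theta)) (Cexpi theta) bL bL'.
Proof.
  pose proof (sqrt2_mult Lam); unfold alpha_bc.
  rewrite basisL_at_Lam, basisL'_at_Lam, basisL_at_neg_Lam, basisL'_at_neg_Lam, Copp_Cexpi, !Cexpi_mul_polar.
  unfold phase_to; split; f_equal; lra.
Qed.

Lemma basisR_bc : alpha_bc Lam (Copp (Cexpi theta)) (Cexpi theta) bR bR'.
Proof.
  pose proof (sqrt2_mult Lam); unfold alpha_bc.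
  rewrite basisR_at_Lam, basisR'_at_Lam, basisR_at_neg_Lam, basisR'_at_neg_Lam, Copp_Cexpi, !Cexpi_mul_polar.
  rewrite <- (polar_2PI k (0 + inv_sqrt2 * Lam)).
  unfold phase_from; split; f_equal; lra.
Qed.

Lemma basisL_at_neg_Lam_neq0 : bL (- Lam) <> C0.
Proof. rewrite basisL_at_neg_Lam; apply polar_neq0; pose proof k_pos; lra. Qed.

Lemma basisL'_at_neg_Lam_neq0 : bL' (- Lam) <> C0.
Proof. rewrite basisL'_at_neg_Lam; apply polar_neq0; pose proof k_pos; lra. Qed.

Lemma basis_wronskian_neq0 : Csub (Cmul (bL (- Lam)) (bR' (- Lam))) (Cmul (bR (- Lam)) (bL' (- Lam))) <> C0.
Proof.
  rewrite basisL_at_neg_Lam, basisR'_at_neg_Lam, basisR_at_neg_Lam, basisL'_at_neg_Lam, !polar_mul.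
  set (P := polar (k * k) (phase_from Lam theta)).
  replace (Csub _ _) with (Csub (Cmul (Cexpi (PI / 4)) P) (Cmul (Cexpi (- (PI / 4))) P))
    by (unfold P; rewrite !Cexpi_mul_polar; f_equal; f_equal; ring).
  replace (Csub _ _) with (Cmul (Csub (Cexpi (PI / 4)) (Cexpi (- (PI / 4)))) P) by ring.
  apply Cmul_neq0; [|apply polar_neq0; pose proof k_pos; nra].
  rewrite Cexpi_PI4, Cexpi_neg_PI4; intro H; apply (f_equal Im) in H; simpl in H.
  pose proof inv_sqrt2_pos; lra.
Qed.

Lemma Dgamma_sub_Dalpha psi : in_Dgamma Lam theta psi -> in_Dalpha Lam (Copp (Cexpi theta)) (Cexpi theta) psi.
Proof.
  intros (psi0 & cL & cR & (dpsi0 & H0 & Z1 & Z2 & Z3 & Z4) & Heq).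
  exists (lin_comb dpsi0 bL' bR' cL cR); split.
  - apply (Hstar_with_ext Lam (lin_comb psi0 bL bR cL cR)); [lra | apply Hstar_with_lin_comb, H0 |].
    intros x Hx; symmetry; apply Heq, Hx.
  - rewrite (Heq Lam), (Heq (- Lam)) by (rewrite ?Rabs_Ropp, Rabs_right; lra).
    apply (alpha_bc_lin_comb Lam _ _ psi0 dpsi0 bL bL' bR bR' cL cR);
      [apply alpha_bc_of_vanishing | apply basisL_bc | apply basisR_bc]; assumption.
Qed.

(* [psi] is matched at [-Lam] by a combination of the basis functions (the Wronskian is nonzero);
   the remainder then vanishes at [Lam] too, by the boundary conditions *)
Lemma Dalpha_sub_Dgamma psi : in_Dalpha Lam (Copp (Cexpi theta)) (Cexpi theta) psi -> in_Dgamma Lam theta psi.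
Proof.
  intros (dpsi & Hpsi & Hbc).
  destruct (Cplx_cramer _ _ _ _ (psi (- Lam)) (dpsi (- Lam)) basis_wronskian_neq0) as (cL & cR & H1 & H2).
  set (psi0 := lin_comb psi bL bR (Copp cL) (Copp cR)).
  set (dpsi0 := lin_comb dpsi bL' bR' (Copp cL) (Copp cR)).
  assert (Hbc0 : alpha_bc Lam (Copp (Cexpi theta)) (Cexpi theta) psi0 dpsi0)
    by (apply alpha_bc_lin_comb; [exact Hbc | apply basisL_bc | apply basisR_bc]).
  assert (Z1 : psi0 (- Lam) = C0) by (unfold psi0, lin_comb; rewrite <- H1; ring).
  assert (Z2 : dpsi0 (- Lam) = C0) by (unfold dpsi0, lin_comb; rewrite <- H2; ring).
  destruct Hbc0 as [B2 B3].
  exists psi0, cL, cR; split.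
  - exists dpsi0; split; [apply Hstar_with_lin_comb, Hpsi|].
    rewrite B2, B3, Z1, Z2; repeat split; ring.
  - intros x _; change (psi x = lin_comb psi0 bL bR cL cR x); unfold psi0, lin_comb; ring.
Qed.

Lemma Dalpha_basisL_bc a2 a3 : in_Dalpha Lam a2 a3 bL -> alpha_bc Lam a2 a3 bL bL'.
Proof.
  intros (dpsi & [Hl Hr] & Hbc).
  assert (HbL : Hstar_with Lam bL (lin_comb (fun _ => C0) bL' bR' C1 C0)).
  { apply (Hstar_with_ext Lam (lin_comb (fun _ => C0) bL bR C1 C0)); [lra | | intros x _; unfold lin_comb; ring].
    apply Hstar_with_lin_comb, Hstar_with_zero; lra. }
  destruct HbL as [[Dl _] [Dr _]]; destruct Hl as [Hl _]; destruct Hr as [Hr _].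
  pose proof (has_deriv_within_unique_left Lam _ _ _ Lam_pos Hl Dl) as Em.
  pose proof (has_deriv_within_unique_right Lam _ _ _ Lam_pos Hr Dr) as Ep.
  unfold lin_comb in Em, Ep; destruct Hbc as [B2 B3]; split.
  - rewrite B2, Em; f_equal; ring.
  - rewrite <- B3, Ep; ring.
Qed.

End Basis.

Theorem theorem2 (Lam theta : R) (a2 a3 : Cplx) :
  0 < Lam -> 0 <= theta < 2 * PI ->
  ((forall psi : R -> Cplx, in_Dgamma Lam theta psi <-> in_Dalpha Lam a2 a3 psi) <->
   (a2 = Copp (Cexpi theta) /\ a3 = Cexpi theta)).
Proof.
  intros HL _; split.
  - intro Heq.
    assert (HbL : in_Dgamma Lam theta (basisL Lam theta)).
    { exists (fun _ => C0), C1, C0; split.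
      - exists (fun _ => C0); split; [apply Hstar_with_zero; lra | repeat split].
      - intros x _; unfold basisL; ring. }
    destruct (Dalpha_basisL_bc Lam theta HL a2 a3 (proj1 (Heq _) HbL)) as [A2 A3].
    destruct (basisL_bc Lam theta HL) as [T2 T3]; split.
    + apply (Cmul_reg_r _ _ (basisL' Lam theta (- Lam))); [congruence | apply basisL'_at_neg_Lam_neq0, HL].
    + apply (Cmul_reg_r _ _ (basisL Lam theta (- Lam))); [congruence | apply basisL_at_neg_Lam_neq0, HL].
  - intros [-> ->] psi; split; [apply Dgamma_sub_Dalpha | apply Dalpha_sub_Dgamma]; exact HL.
Qed.
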